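(* Let $R$ be a commutative ring with $\mathrm{Spec}(R)\neq\emptyset$, and let $M=\bigoplus_{\alpha\in\mathcal A}e_\alpha R$ be a free $R$-module with an infinite basis $\{e_\alpha\}_{\alpha\in\mathcal A}$. Then $\mathrm{Spec}_R(M)$, with the topology induced by the hull-kernel topology of $\mathrm{SMod}(M|R)$, is not quasi-compact (and hence not spectral).
   Context: $\mathrm{SMod}(M|R)$ is the set of $R$-submodules of $M$; the hull-kernel topology on it has as subbasis of closed sets the sets $\boldsymbol V(x_1,\dots,x_m):=\{N\mid x_1,\dots,x_m\in N\}$ for finite $\{x_1,\dots,x_m\}\subseteq M$. A prime submodule of $M$ is a submodule $P\neq M$ such that whenever $am\in P$ with $a\in R$, $m\in M$, then $m\in P$ or $aM\subseteq P$; $\mathrm{Spec}_R(M)$ is the set of prime submodules of $M$. *)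

From HB Require Import structures.
From mathcomp Require Import all_boot all_algebra.
From Stdlib Require Import List.
Set Implicit Arguments. Unset Strict Implicit. Unset Printing Implicit Defensive.
Import GRing.Theory.
Local Open Scope ring_scope.

Definition is_prime_ideal (R : comPzRingType) (I : R -> Prop) : Prop :=
  [/\ I 0,
      (forall x y, I x -> I y -> I (x + y)),
      (forall r x, I x -> I (r * x)),
      ~ I 1 &
      (forall a b, I (a * b) -> I a \/ I b)].

(* The free R-module with basis {e_a}_{a in A}: finitely supported functions A -> R;
   e_a is the indicator function of a. *)
Definition finsupp (R : comPzRingType) (A : Type) (f : A -> R) : Prop :=
  exists s : list A, forall a, ~ List.In a s -> f a = 0.

Definition freemod (R : comPzRingType) (A : Type) := {f : A -> R | finsupp f}.

Section FreeMod.
Variables (R : comPzRingType) (A : Type).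

Lemma finsupp0 : finsupp (fun _ : A => (0 : R)).
Proof. by exists nil. Qed.

Lemma finsuppD (f g : A -> R) : finsupp f -> finsupp g -> finsupp (fun a => f a + g a).
Proof.
move=> [s Hs] [t Ht]; exists (s ++ t) => a Ha.
rewrite Hs ?Ht ?addr0 // => H; apply: Ha; apply: List.in_or_app; by [left|right].
Qed.

Lemma finsuppZ (r : R) (f : A -> R) : finsupp f -> finsupp (fun a => r * f a).
Proof. by move=> [s Hs]; exists s => a Ha; rewrite Hs ?mulr0. Qed.

Definition fm_zero : freemod R A := exist _ _ finsupp0.
Definition fm_add (x y : freemod R A) : freemod R A :=
  exist _ _ (finsuppD (proj2_sig x) (proj2_sig y)).
Definition fm_scale (r : R) (x : freemod R A) : freemod R A :=
  exist _ _ (finsuppZ r (proj2_sig x)).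
End FreeMod.

Record submodule (R : comPzRingType) (A : Type) := Submodule {
  smem : freemod R A -> Prop;
  smem0 : smem (fm_zero R A);
  smemD : forall x y, smem x -> smem y -> smem (fm_add x y);
  smemZ : forall (r : R) x, smem x -> smem (fm_scale r x)
}.

Definition is_prime_submodule (R : comPzRingType) (A : Type) (P : submodule R A) : Prop :=
  (exists m, ~ smem P m) /\
  (forall (a : R) (m : freemod R A),
      smem P (fm_scale a m) -> smem P m \/ (forall m', smem P (fm_scale a m'))).

(* Generic point-set topology from a subbasis of closed sets:
   closed sets = arbitrary intersections of finite unions of subbasic closed sets. *)
Definition closed_from_subbasis (X : Type) (S : (X -> Prop) -> Prop) (C : X -> Prop) : Prop :=
  exists (I : Type) (F : I -> list (X -> Prop)),
    (forall i D, List.In D (F i) -> S D) /\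
    (forall x, C x <-> (forall i, exists2 D, List.In D (F i) & D x)).

Definition open_from_subbasis (X : Type) (S : (X -> Prop) -> Prop) (U : X -> Prop) : Prop :=
  exists C, closed_from_subbasis S C /\ (forall x, U x <-> ~ C x).

Definition quasi_compact_subspace (X : Type) (S : (X -> Prop) -> Prop) (Y : X -> Prop) : Prop :=
  forall (I : Type) (U : I -> X -> Prop),
    (forall i, open_from_subbasis S (U i)) ->
    (forall y, Y y -> exists i, U i y) ->
    exists l : list I, forall y, Y y -> exists2 i, List.In i l & U i y.

Definition hull_kernel_subbasis (R : comPzRingType) (A : Type)
    (D : submodule R A -> Prop) : Prop :=
  exists xs : list (freemod R A),
    forall N, D N <-> (forall x, List.In x xs -> smem N x).

From HB Require Import structures.
From mathcomp Require Import all_boot all_algebra.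
From Stdlib Require Import List Classical ClassicalEpsilon.
Set Implicit Arguments. Unset Strict Implicit.
Import GRing.Theory.
Local Open Scope ring_scope.

(* The open sets [{N | m \notin N}] cover Spec_R(M), since prime submodules are proper.
   Finitely many [m] are supported on finitely many basis indices; an index [b] outside
   them exists because the basis is infinite, and for a prime ideal [p] the prime
   submodule [{m | m_b \in p}] contains all of them, so there is no finite subcover. *)

Lemma exists_notin_list (A : Type) (s : list A) :
  ~ (exists t : list A, forall a, List.In a t) -> exists b, ~ List.In b s.
Proof. by move=> hinf; apply: not_all_ex_not => hs; apply: hinf; exists s. Qed.

Section FreeModule.
Variables (R : comPzRingType) (A : Type).

Lemma freemod_common_support (l : list (freemod R A)) :
  exists s : list A, forall m, List.In m l -> forall a, ~ List.In a s -> proj1_sig m a = 0.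
Proof.
elim: l => [|m l [s Hs]]; first by exists nil.
case: (proj2_sig m) => t Ht.
exists (t ++ s) => m' [<-|Hm] a Ha.
- by apply: Ht => H; apply: Ha; apply: in_or_app; left.
- by apply: Hs => // H; apply: Ha; apply: in_or_app; right.
Qed.

Definition basis_vector (b : A) : freemod R A.
Proof.
exists (fun a => if excluded_middle_informative (a = b) then 1 else 0).
exists (b :: nil) => a Ha; case: excluded_middle_informative => // ab.
by case: Ha; left.
Defined.

Lemma basis_vector_at (b : A) : proj1_sig (basis_vector b) b = 1.
Proof. by rewrite /=; case: excluded_middle_informative. Qed.

Lemma open_notin_submodule (m : freemod R A) :
  open_from_subbasis (@hull_kernel_subbasis R A) (fun N => ~ smem N m).
Proof.
exists (fun N => smem N m); split=> //.
exists unit, (fun _ => (fun N : submodule R A => smem N m) :: nil); split.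
- move=> _ D [<-|[]]; exists (m :: nil) => N; split.
  + by move=> Hm x [<-|[]].
  + by apply; left.
- move=> N; split.
  + by move=> Hm _; exists (fun N : submodule R A => smem N m) => //; left.
  + by case/(_ tt) => D [<-|[]].
Qed.

Section CoordinatePreimage.
Variables (p : R -> Prop) (hp : is_prime_ideal p) (b : A).

Definition coord_preimage : submodule R A.
Proof.
refine (@Submodule R A (fun m => p (proj1_sig m b)) _ _ _); case: hp => p0 pD pM _ _.
- exact: p0.
- by move=> x y /=; apply: pD.
- by move=> r x /=; apply: pM.
Defined.

Lemma coord_preimage_prime : is_prime_submodule coord_preimage.
Proof.
case: hp => _ _ pM p1 pprime; split.
- exists (basis_vector b); change (~ p (proj1_sig (basis_vector b) b)).
  by rewrite basis_vector_at.
- move=> r m /= /pprime [pr|pm]; [right|by left].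
  by move=> m' /=; rewrite mulrC; apply: pM.
Qed.

End CoordinatePreimage.

Lemma prime_submodule_containing_list (l : list (freemod R A)) :
  (exists p : R -> Prop, is_prime_ideal p) ->
  ~ (exists s : list A, forall a, List.In a s) ->
  exists2 P, is_prime_submodule P & forall m, List.In m l -> smem P m.
Proof.
move=> [p hp] hinf.
have [s supp_s] := freemod_common_support l.
have [b bs] := exists_notin_list s hinf.
exists (coord_preimage hp b); first exact: coord_preimage_prime.
by move=> m ml /=; rewrite (supp_s m ml b bs); case: hp.
Qed.

End FreeModule.

Theorem mainTheorem7 (R : comPzRingType) (A : Type)
  (hSpec : exists I : R -> Prop, is_prime_ideal I)
  (hinf : ~ exists s : list A, forall a : A, List.In a s) :
  ~ quasi_compact_subspace (@hull_kernel_subbasis R A) (@is_prime_submodule R A).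
Proof.
move=> qc.
have [|l cover] := qc _ (fun m N => ~ smem N m) (@open_notin_submodule R A).
  by move=> N [[m Nm] _]; exists m.
have [P Pprime Pl] := prime_submodule_containing_list l hSpec hinf.
by have [m ml] := cover P Pprime; apply; apply: Pl.
Qed.
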